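(* Let $X$ be a finite set, $t$ a full support transition function and $s$ a full support arrival function. Then $t$ and $s$ are jointly menu invariant if and only if they satisfy no investment: for every strict investment plan $i$ and every $\delta\in(0,1)$ there exists $\succ\in\mathcal{L}(X)$ such that $$\sum_{(A,\succ')\in\mathcal{X}_2\times\mathcal{L}(X)}\ \sum_{B\in\mathcal{X}_2}\delta\, i(A,\succ')\,\rho_s(B\mid A)\,t_{\succ'}(M(\succ,B),\succ)<\sum_{A\in\mathcal{X}_2} i(A,\succ).$$
   Context: $X$ is a finite set; $\mathcal{X}_2$ the collection of subsets of $X$ with at least two elements; $\mathcal{L}(X)$ the linear orders on $X$; $M(\succ,A)$ the $\succ$-maximal element of $A$. A transition function $t:X\times\mathcal{L}(X)\to\Delta(\mathcal{L}(X))$ is full support if all its values have full support; $t_{\succ'}(x,\succ)$ is the probability of $\succ'$ under $t(x,\succ)$. An arrival function is $s:\mathcal{X}_2\to\Delta(\mathcal{X}_2)$, full support if all values have full support; $s_B(A)$ is the probability of $B$ under $s(A)$. Let $\pi$ be the unique stationary distribution of the Markov chain on $\mathcal{X}_2$ given by $s$, and $\rho_s(B\mid A)=\pi(B)s_A(B)/\pi(A)$. The pair $(t,s)$ defines a Markov chain on $\mathcal{X}_2\times\mathcal{L}(X)$ with transition probability from $(A,\succ)$ to $(B,\succ')$ equal to $s_B(A)\,t_{\succ'}(M(\succ,A),\succ)$; it has a unique stationary distribution $\psi$. The pair is jointly menu invariant if $\psi(A,\succ)=\pi'(A)\nu(\succ)$ for some $\pi'\in\Delta(\mathcal{X}_2)$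 and $\nu\in\Delta(\mathcal{L}(X))$. An investment plan is $i:\mathcal{X}_2\times\mathcal{L}(X)\to\mathbb{R}_{\ge0}$, strict if not identically zero. *)

From mathcomp Require Import all_boot all_order all_algebra.
From mathcomp Require Import reals.
Set Implicit Arguments. Unset Strict Implicit. Unset Printing Implicit Defensive.
Import Order.TTheory GRing.Theory Num.Theory.
Local Open Scope ring_scope.

Section Defs.
Variable X : finType.

Definition X2 := {A : {set X} | 1 < #|A|}%N.

(* Linear orders on X, given by their strict relation x ≻ y *)
Definition is_linord (r : {ffun X -> {ffun X -> bool}}) : bool :=
  [&& [forall x, ~~ r x x],
      [forall x, forall y, forall z, r x y ==> r y z ==> r x z] &
      [forall x, forall y, (x != y) ==> (r x y || r y x)]].

Definition LO := {r : {ffun X -> {ffun X -> bool}} | is_linord r}.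

Definition lo_rel (r : LO) (x y : X) : bool := val r x y.

(* an (irrelevant) default element of A, used only to make M total *)
Definition X2_witness (A : X2) : X :=
  @enum_val X (mem (val A)) (Ordinal (ltnW (valP A))).

Definition M (r : LO) (A : X2) : X :=
  odflt (X2_witness A)
    [pick x in val A | [forall y in val A, (y != x) ==> lo_rel r x y]].
End Defs.

Section Prob.
Variable R : realType.

Definition is_dist (S : finType) (p : S -> R) : Prop :=
  (forall x, 0 <= p x) /\ \sum_(x : S) p x = 1.

Variable X : finType.

(* transition function t : X × L(X) -> Δ(L(X));
   t x r r' = t_{r'}(x, r), the probability of r' under t(x, r) *)
Definition transition_fun (t : X -> LO X -> LO X -> R) : Prop :=
  forall x r, is_dist (t x r).
Definition full_support_t (t : X -> LO X -> LO X -> R) : Prop :=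
  forall x r r', 0 < t x r r'.

(* arrival function s : X_2 -> Δ(X_2); s A B = s_B(A), the probability of B under s(A) *)
Definition arrival_fun (s : X2 X -> X2 X -> R) : Prop :=
  forall A, is_dist (s A).
Definition full_support_s (s : X2 X -> X2 X -> R) : Prop :=
  forall A B, 0 < s A B.

Definition stationary_s (s : X2 X -> X2 X -> R) (pi : X2 X -> R) : Prop :=
  is_dist pi /\ forall B, pi B = \sum_(A : X2 X) pi A * s A B.

(* ρ_s(B | A) = π(B) s_A(B) / π(A) *)
Definition rho (s : X2 X -> X2 X -> R) (pi : X2 X -> R) (B A : X2 X) : R :=
  pi B * s B A / pi A.

Definition stationary_joint (t : X -> LO X -> LO X -> R)
    (s : X2 X -> X2 X -> R) (psi : X2 X * LO X -> R) : Prop :=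
  is_dist psi /\
  forall B r', psi (B, r') =
    \sum_(Ar : X2 X * LO X) psi Ar * s Ar.1 B * t (M Ar.2 Ar.1) Ar.2 r'.

Definition jointly_menu_invariant (t : X -> LO X -> LO X -> R)
    (s : X2 X -> X2 X -> R) : Prop :=
  forall psi, stationary_joint t s psi ->
    exists (pi' : X2 X -> R) (nu : LO X -> R),
      is_dist pi' /\ is_dist nu /\ forall A r, psi (A, r) = pi' A * nu r.

Definition investment_plan (i : X2 X -> LO X -> R) : Prop :=
  forall A r, 0 <= i A r.
Definition strict_investment_plan (i : X2 X -> LO X -> R) : Prop :=
  investment_plan i /\ exists A r, i A r != 0.

Definition no_investment (t : X -> LO X -> LO X -> R)
    (s : X2 X -> X2 X -> R) (pi : X2 X -> R) : Prop :=
  forall (i : X2 X -> LO X -> R) (delta : R),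
    strict_investment_plan i -> 0 < delta < 1 ->
    exists r : LO X,
      \sum_(Ar' : X2 X * LO X) \sum_(B : X2 X)
          delta * i Ar'.1 Ar'.2 * rho s pi B Ar'.1 * t (M r B) r Ar'.2
      < \sum_(A : X2 X) i A r.
End Prob.

(* Let P_A be the kernel on orders that first draws the previous menu B from the
   time-reversed arrival chain rho_s(. | A) and then moves the order by
   t(M(>, B), >).  Summing the joint chain over menus shows that a product
   pi' x nu is stationary for it iff pi' = pi and nu is stationary for every P_A.
   Full support makes stationary distributions unique, so joint menu invariance
   says exactly that the P_A have a common stationary distribution nu.

   If they do, averaging the left-hand side of the investment inequality against
   nu > 0 gives delta times the average of the right-hand side, so the
   inequality cannot fail for every order.  If P_A and P_A' have distinct
   stationary distributions mu and mu', pick w with mu.w = 0 = mu'.(1 - w) and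
   solve the Poisson equations P_A f - f = w and P_A' g - g = 1 - w (the range of
   P - I is the hyperplane orthogonal to its stationary distribution).  Investing
   f + c at A and g + c at A' yields a strict plan whose expected value exceeds
   its cost by one unit in every order, which violates no investment for delta
   close to 1. *)

From mathcomp Require Import all_boot all_order all_algebra.
From mathcomp Require Import reals.
From mathcomp Require Import zify ring lra.
Import Order.TTheory GRing.Theory Num.Theory.
Set Implicit Arguments. Unset Strict Implicit. Unset Printing Implicit Defensive.
Local Open Scope ring_scope.

Lemma sum_enum_val (R : nmodType) (S : finType) (F : S -> R) :
  \sum_(x : S) F x = \sum_(i < #|S|) F (enum_val i).
Proof. by rewrite (reindex (@enum_val S S)) //; exact: onW_bij (enum_val_bij S). Qed.

Lemma sum_pair (R : nmodType) (I J : finType) (F : I * J -> R) :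
  \sum_(x : I * J) F x = \sum_i \sum_j F (i, j).
Proof. by rewrite pair_big; apply: eq_big => -[]. Qed.

Section Distributions.
Variable R : realType.

Lemma exists_dist_gt0 (S : finType) (p : S -> R) : is_dist p -> exists x, 0 < p x.
Proof.
move=> [p_ge0 p_sum]; have [x px|p_le0] := pickP (fun x => 0 < p x); first by exists x.
suff : \sum_x p x = 0 by rewrite p_sum => /eqP; rewrite oner_eq0.
by apply: big1 => x _; apply/eqP; rewrite eq_le p_ge0 andbT leNgt p_le0.
Qed.

Lemma is_dist_prod (S T : finType) (p : S -> R) (q : T -> R) :
  is_dist p -> is_dist q -> is_dist (fun x : S * T => p x.1 * q x.2).
Proof.
move=> [p_ge0 p_sum] [q_ge0 q_sum]; split=> [x|]; first exact: mulr_ge0.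
rewrite sum_pair -[RHS]p_sum; apply: eq_bigr => x _ /=.
by rewrite -mulr_sumr q_sum mulr1.
Qed.

Lemma separating_weight (S : finType) (mu mu' : S -> R) (r1 : S) :
  \sum_x mu x = 1 -> \sum_x mu' x = 1 -> mu r1 != mu' r1 ->
  exists w : S -> R,
    \sum_x mu x * w x = 0 /\ \sum_x mu' x * (1 - w x) = 0.
Proof.
move=> mu_sum mu'_sum neq.
have dot (m : S -> R) (c : R) : \sum_x m x * ((x == r1)%:R - c) = m r1 - c * \sum_x m x.
  under eq_bigr => x _ do rewrite mulrBr mulr_natr mulrb.
  by rewrite sumrB -big_mkcond big_pred1_eq -mulr_suml mulrC.
have d_neq0 : mu' r1 - mu r1 != 0 by rewrite subr_eq0 eq_sym.
exists (fun x => ((x == r1)%:R - mu r1) / (mu' r1 - mu r1)); split.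
  under eq_bigr do rewrite mulrA.
  by rewrite -mulr_suml dot mu_sum mulr1 subrr mul0r.
under eq_bigr do rewrite mulrBr mulr1 mulrA.
by rewrite sumrB -mulr_suml dot mu'_sum mulr1 divff // subrr.
Qed.

End Distributions.

Section Kernel.
Variables (R : realType) (S : finType) (P : S -> S -> R).

Definition stochastic := forall x, is_dist (P x).
Definition invariant (v : S -> R) := forall y, \sum_x v x * P x y = v y.
Definition drift (f : S -> R) (x : S) := \sum_y P x y * f y - f x.

Lemma eq_invariant u v : u =1 v -> invariant u -> invariant v.
Proof.
by move=> uv u_inv y; rewrite -uv -u_inv; apply: eq_bigr => x _; rewrite uv.
Qed.

Lemma drift_lin (a b : R) f g x :
  drift (fun y => a * f y + b * g y) x = a * drift f x + b * drift g x.
Proof.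
rewrite /drift.
under eq_bigr => y _ do rewrite mulrDr (mulrCA (P x y) a) (mulrCA (P x y) b).
by rewrite big_split /= -!mulr_sumr; ring.
Qed.

Hypothesis P_stoch : stochastic.

Lemma drift_shift f c x : drift (fun y => f y + c) x = drift f x.
Proof.
rewrite /drift; under eq_bigr do rewrite mulrDr.
by rewrite big_split /= -mulr_suml (P_stoch x).2; ring.
Qed.

Lemma invariant_norm v : invariant v -> invariant (fun x => `|v x|).
Proof.
move=> v_inv.
have le_norm y : `|v y| <= \sum_x `|v x| * P x y.
  rewrite -{1}v_inv (le_trans (ler_norm_sum _ _ _)) //.
  by apply: ler_sum => x _; rewrite normrM (ger0_norm ((P_stoch x).1 y)).
have gap0 : \sum_y (\sum_x `|v x| * P x y - `|v y|) = 0.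
  rewrite sumrB exchange_big /=.
  under eq_bigr => x _ do rewrite -mulr_sumr (P_stoch x).2 mulr1.
  by rewrite subrr.
move=> y; apply/eqP; rewrite -subr_eq0; apply/eqP.
by apply: (psumr_eq0P _ gap0) => // z _; rewrite subr_ge0.
Qed.

Hypothesis P_pos : forall x y, 0 < P x y.

(* Equality in [|d x| = |sum_i d i P i x| <= sum_i |d i| P i x] forces every
   [d i] to have the sign of [d x]. *)
Lemma invariant_ge0_at d x : invariant d -> 0 <= d x -> forall y, 0 <= d y.
Proof.
move=> d_inv dx_ge0.
have gap0 : \sum_i (`|d i| - d i) * P i x = 0.
  under eq_bigr do rewrite mulrBl.
  by rewrite sumrB (invariant_norm d_inv) d_inv ger0_norm // subrr.
have gap_ge0 i : 0 <= (`|d i| - d i) * P i x.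
  by rewrite mulr_ge0 ?subr_ge0 ?ler_norm // ltW.
move=> y; move: (psumr_eq0P (fun i _ => gap_ge0 i) gap0 (i := y) isT) => /eqP.
by rewrite mulf_eq0 (gt_eqF (P_pos y x)) orbF subr_eq0 => /eqP <-.
Qed.

Lemma invariant_sum0_eq0 d : invariant d -> \sum_x d x = 0 -> forall x, d x = 0.
Proof.
move=> d_inv d_sum x.
wlog dx_ge0 : d d_inv d_sum / 0 <= d x => [hw|].
  have [/hw-> //|/ltW dx_le0] := leP 0 (d x).
  apply/eqP; rewrite -oppr_eq0; apply/eqP.
  apply: (hw (fun y => - d y)); rewrite ?oppr_ge0 //.
    by move=> y; rewrite -(d_inv y) -sumrN; apply: eq_bigr => z _; rewrite mulNr.
  by rewrite sumrN d_sum oppr0.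
exact: (psumr_eq0P (fun y _ => invariant_ge0_at d_inv dx_ge0 y) d_sum).
Qed.

Lemma invariant_proportional mu v : is_dist mu -> invariant mu -> invariant v ->
  forall x, v x = (\sum_y v y) * mu x.
Proof.
move=> [_ mu_sum] mu_inv v_inv x; apply/eqP; rewrite -subr_eq0; apply/eqP.
pose c := \sum_y v y.
apply: (@invariant_sum0_eq0 (fun x => v x - c * mu x)) => [y|].
  under eq_bigr do rewrite mulrBl -mulrA.
  by rewrite sumrB -mulr_sumr mu_inv v_inv.
by rewrite sumrB -mulr_sumr mu_sum mulr1 subrr.
Qed.

Lemma invariant_dist_unique mu nu : is_dist mu -> invariant mu ->
  is_dist nu -> invariant nu -> forall x, nu x = mu x.
Proof.
move=> mu_dist mu_inv nu_dist nu_inv x.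
by rewrite (invariant_proportional mu_dist mu_inv nu_inv) nu_dist.2 mul1r.
Qed.

Lemma invariant_dist_gt0 mu : is_dist mu -> invariant mu -> forall y, 0 < mu y.
Proof.
move=> mu_dist mu_inv y; have [x mux_gt0] := exists_dist_gt0 mu_dist.
rewrite -mu_inv (bigD1 x) //= ltr_pwDl ?mulr_gt0 // sumr_ge0 // => z _.
by rewrite mulr_ge0 ?mu_dist.1 // ltW.
Qed.

Definition rowv (v : S -> R) : 'rV[R]_#|S| := \row_i v (enum_val i).
Definition generator : 'M[R]_#|S| :=
  \matrix_(i, j) (P (enum_val i) (enum_val j) - (i == j)%:R).

Lemma rowv_inj u v : rowv u = rowv v -> u =1 v.
Proof.
by move=> /rowP uv x; have := uv (enum_rank x); rewrite !mxE enum_rankK.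
Qed.

Lemma rowvK (u : 'rV[R]_#|S|) : rowv (fun x => u 0 (enum_rank x)) = u.
Proof. by apply/rowP => i; rewrite mxE enum_valK. Qed.

Lemma rowv_mul_generator v :
  rowv v *m generator = rowv (fun y => \sum_x v x * P x y - v y).
Proof.
apply/rowP => j; rewrite [RHS]mxE (sum_enum_val (fun x => v x * _)) !mxE.
under eq_bigr => i _ do rewrite !mxE mulrBr.
rewrite sumrB; congr (_ - _).
by rewrite (bigD1 j) //= eqxx mulr1 big1 ?addr0 // => i /negPf ->; rewrite mulr0.
Qed.

Lemma generator_mul_colv f : generator *m (rowv f)^T = (rowv (drift f))^T.
Proof.
apply/colP => i; rewrite mxE ![RHS]mxE /drift (sum_enum_val (fun y => P _ y * f y)).
under eq_bigr => j _ do rewrite !mxE mulrBl.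
rewrite sumrB; congr (_ - _).
rewrite (bigD1 i) //= eqxx mul1r big1 ?addr0 // => j.
by rewrite eq_sym => /negPf ->; rewrite mul0r.
Qed.

Lemma rowv_mul_tr u v : rowv u *m (rowv v)^T = (\sum_x u x * v x)%:M.
Proof.
apply/rowP => j; rewrite ord1 !mxE (sum_enum_val (fun x => u x * v x)).
by apply: eq_bigr => i _; rewrite !mxE.
Qed.

Lemma invariantP v : invariant v <-> rowv v *m generator = 0.
Proof.
rewrite rowv_mul_generator; split=> [v_inv | /rowP v_inv y].
  by apply/rowP => j; rewrite !mxE v_inv subrr.
by apply/eqP; rewrite -subr_eq0; have := v_inv (enum_rank y); rewrite !mxE enum_rankK => ->.
Qed.

Lemma exists_invariant_dist (x0 : S) : exists mu, is_dist mu /\ invariant mu.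
Proof.
have ones_ker : rowv (fun _ => 1) *m generator^T = 0.
  rewrite -[rowv _]trmxK -trmx_mul generator_mul_colv; apply/rowP => i.
  by rewrite !mxE /drift; under eq_bigr do rewrite mulr1; rewrite (P_stoch _).2 subrr.
have ones_neq0 : rowv (fun _ => 1) != 0.
  by apply/eqP => /rowP /(_ (enum_rank x0)); rewrite !mxE; apply/eqP; exact: oner_neq0.
have /det0P [u u_neq0] : \det generator == 0.
  by rewrite -det_tr; apply/det0P; exists (rowv (fun _ => 1)).
rewrite -[u]rowvK -invariantP; set d := fun x => _ => d_inv.
have [x dx_neq0] : exists x, d x != 0.
  apply/existsP; apply: contraNT u_neq0 => /existsPn d0; apply/eqP/rowP => i.
  by have := d0 (enum_val i); rewrite /d enum_valK mxE => /negbNE/eqP.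
have norm_gt0 : 0 < \sum_y `|d y|.
  by rewrite (bigD1 x) //= ltr_pwDl ?normr_gt0 // sumr_ge0.
exists (fun y => `|d y| / \sum_y `|d y|); split; first split.
- by move=> y; rewrite divr_ge0 // ltW.
- by rewrite -mulr_suml divff // gt_eqF.
- move=> y; rewrite -(invariant_norm d_inv y) mulr_suml.
  by apply: eq_bigr => z _; rewrite mulrAC.
Qed.

(* The kernel of [generator] is spanned by [rowv mu], so its rank is [#|S| - 1];
   its column space is thus the whole hyperplane orthogonal to [mu]. *)
Lemma exists_drift_eq mu w : is_dist mu -> invariant mu -> \sum_x mu x * w x = 0 ->
  exists f, forall x, drift f x = w x.
Proof.
move=> mu_dist mu_inv mu_w; set m := rowv mu.
have ker_sub : (kermx generator <= m)%MS.
  apply/row_subP => k; set u := row k (kermx generator).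
  have : u *m generator = 0 by rewrite -row_mul mulmx_ker row0.
  rewrite -[u]rowvK -invariantP => /(invariant_proportional mu_dist mu_inv) uE.
  have -> : rowv (fun x => u 0 (enum_rank x)) = (\sum_y u 0 (enum_rank y)) *: m.
    by apply/rowP => i; rewrite [LHS]mxE uE [RHS]mxE; congr (_ * _); rewrite mxE.
  exact/scalemx_sub/submx_refl.
have m_neq0 : m != 0.
  have [x mux_gt0] := exists_dist_gt0 mu_dist.
  by apply/eqP => /rowP /(_ (enum_rank x)); rewrite !mxE enum_rankK; apply/eqP/lt0r_neq0.
have rank_m : \rank m = 1%N by rewrite rank_rV m_neq0.
have gen_sub : (generator^T <= kermx m^T)%MS.
  by apply/sub_kermxP; rewrite -trmx_mul (proj1 (invariantP _) mu_inv) trmx0.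
have sub_gen : (kermx m^T <= generator^T)%MS.
  rewrite -(mxrank_leqif_sup gen_sub).2 mxrank_tr.
  have := mxrankS ker_sub; have := mxrankS gen_sub; have := rank_leq_row generator.
  by rewrite !mxrank_ker !mxrank_tr rank_m; lia.
have w_sub : (rowv w <= kermx m^T)%MS.
  by apply/sub_kermxP; rewrite rowv_mul_tr (eq_bigr _ (fun x _ => mulrC _ _)) mu_w raddf0.
have /submxP [D wD] := submx_trans w_sub sub_gen.
exists (fun x => D 0 (enum_rank x)); apply: rowv_inj; apply: trmx_inj.
by rewrite -generator_mul_colv rowvK wD trmx_mul trmxK.
Qed.
End Kernel.

Section Model.
Variables (R : realType) (X : finType).
Variables (t : X -> LO X -> LO X -> R) (s : X2 X -> X2 X -> R) (pi : X2 X -> R).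
Hypotheses (t_trans : transition_fun t) (t_pos : full_support_t t).
Hypotheses (s_arr : arrival_fun s) (s_pos : full_support_s s).
Hypothesis pi_stat : stationary_s s pi.

Definition menu_kernel (A : X2 X) (r r' : LO X) : R :=
  \sum_B rho s pi B A * t (M r B) r r'.

Definition common_invariant (nu : LO X -> R) :=
  is_dist nu /\ forall A, invariant (menu_kernel A) nu.

Definition joint_kernel (x y : X2 X * LO X) : R :=
  s x.1 y.1 * t (M x.2 x.1) x.2 y.2.

Lemma pi_invariant : invariant s pi.
Proof. by move=> B; rewrite pi_stat.2. Qed.

Lemma pi_gt0 A : 0 < pi A.
Proof. exact: (invariant_dist_gt0 s_pos pi_stat.1 pi_invariant A). Qed.

Lemma rho_gt0 A B : 0 < rho s pi B A.
Proof. by rewrite /rho divr_gt0 ?mulr_gt0 ?pi_gt0. Qed.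

Lemma menu_kernel_stochastic A : stochastic (menu_kernel A).
Proof.
move=> r; split=> [r'|].
  by apply: sumr_ge0 => B _; rewrite mulr_ge0 ?(ltW (rho_gt0 _ _)) ?(t_trans _ _).1.
rewrite exchange_big /=; under eq_bigr do rewrite -mulr_sumr (t_trans _ _).2 mulr1.
by rewrite /rho -mulr_suml pi_invariant divff // gt_eqF ?pi_gt0.
Qed.

Lemma menu_kernel_gt0 A r r' : 0 < menu_kernel A r r'.
Proof.
have term_gt0 B : 0 < rho s pi B A * t (M r B) r r' by rewrite mulr_gt0 ?rho_gt0.
by rewrite /menu_kernel (bigD1 A) //= ltr_pwDl // sumr_ge0 // => B _; rewrite ltW.
Qed.

Lemma joint_kernel_stochastic : stochastic joint_kernel.
Proof.
move=> x; split=> [y|]; first by rewrite mulr_ge0 ?(s_arr _).1 ?(t_trans _ _).1.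
rewrite sum_pair /joint_kernel -[RHS](s_arr x.1).2; apply: eq_bigr => B _ /=.
by rewrite -mulr_sumr (t_trans _ _).2 mulr1.
Qed.

Lemma joint_kernel_gt0 x y : 0 < joint_kernel x y.
Proof. exact: mulr_gt0. Qed.

Lemma stationary_jointE psi :
  stationary_joint t s psi <-> is_dist psi /\ invariant joint_kernel psi.
Proof.
rewrite /stationary_joint /invariant /joint_kernel.
split=> -[psi_dist psi_inv]; split=> //.
  by move=> [B r']; rewrite psi_inv; apply: eq_bigr => x _; rewrite mulrA.
by move=> B r'; rewrite -(psi_inv (B, r')); apply: eq_bigr => x _; rewrite mulrA.
Qed.

Lemma joint_kernel_product nu B r' :
  \sum_x pi x.1 * nu x.2 * joint_kernel x (B, r') =
  pi B * \sum_r nu r * menu_kernel B r r'.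
Proof.
rewrite sum_pair exchange_big mulr_sumr; apply: eq_bigr => r _.
rewrite /menu_kernel !mulr_sumr; apply: eq_bigr => A _.
by rewrite /joint_kernel /rho /=; field; rewrite gt_eqF ?pi_gt0.
Qed.

Lemma invariant_product nu :
  invariant joint_kernel (fun x => pi x.1 * nu x.2) <->
  forall A, invariant (menu_kernel A) nu.
Proof.
split=> [prod_inv A r' | nu_inv [B r']]; last by rewrite joint_kernel_product nu_inv.
have := prod_inv (A, r'); rewrite joint_kernel_product /=.
exact/(mulfI (lt0r_neq0 (pi_gt0 A))).
Qed.

Lemma invariant_product_marginal pi' nu : \sum_r nu r = 1 ->
  invariant joint_kernel (fun x => pi' x.1 * nu x.2) -> invariant s pi'.
Proof.
move=> nu_sum prod_inv B.
rewrite -[RHS]mulr1 -nu_sum mulr_sumr.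
under [RHS]eq_bigr => r' _ do rewrite -(prod_inv (B, r')).
rewrite exchange_big sum_pair; apply: eq_bigr => A _ /=.
rewrite -[LHS]mulr1 -nu_sum !mulr_sumr; apply: eq_bigr => r _.
by rewrite /joint_kernel /= -!mulr_sumr (t_trans _ _).2; ring.
Qed.

Lemma no_investment_sumE (i : X2 X -> LO X -> R) delta r :
  \sum_(Ar' : X2 X * LO X) \sum_(B : X2 X)
      delta * i Ar'.1 Ar'.2 * rho s pi B Ar'.1 * t (M r B) r Ar'.2 =
  delta * \sum_A \sum_r' menu_kernel A r r' * i A r'.
Proof.
rewrite sum_pair mulr_sumr; apply: eq_bigr => A _; rewrite mulr_sumr.
apply: eq_bigr => r' _; rewrite /menu_kernel mulr_suml mulr_sumr.
by apply: eq_bigr => B _ /=; ring.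
Qed.

Lemma jointly_menu_invariant_common_invariant (x0 : X2 X * LO X) :
  jointly_menu_invariant t s -> exists nu, common_invariant nu.
Proof.
move=> jmi.
have [psi [psi_dist psi_inv]] := exists_invariant_dist joint_kernel_stochastic x0.
have [pi' [nu [pi'_dist [nu_dist psiE]]]] :=
  jmi psi (proj2 (stationary_jointE psi) (conj psi_dist psi_inv)).
have prod_inv : invariant joint_kernel (fun x => pi' x.1 * nu x.2).
  by apply: eq_invariant psi_inv => -[A r]; exact: psiE.
have pi'_inv := invariant_product_marginal nu_dist.2 prod_inv.
have pi'E := invariant_dist_unique s_arr s_pos pi_stat.1 pi_invariant pi'_dist pi'_inv.
exists nu; split=> //; apply/invariant_product.
by apply: eq_invariant prod_inv => x; rewrite pi'E.
Qed.

Lemma common_invariant_jointly_menu_invariant nu :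
  common_invariant nu -> jointly_menu_invariant t s.
Proof.
move=> [nu_dist nu_inv] psi /stationary_jointE [psi_dist psi_inv].
exists pi, nu; split; first exact: pi_stat.1.
split=> // A r; apply: (invariant_dist_unique joint_kernel_stochastic joint_kernel_gt0
  (is_dist_prod pi_stat.1 nu_dist) _ psi_dist psi_inv (A, r)).
exact/invariant_product.
Qed.

Lemma common_invariant_no_investment nu :
  common_invariant nu -> no_investment t s pi.
Proof.
move=> [nu_dist nu_inv] i delta [i_ge0 [A0 [r0 i_neq0]]] /andP [delta_gt0 delta_lt1].
have nu_gt0 := invariant_dist_gt0 (menu_kernel_gt0 A0) nu_dist (nu_inv A0).
pose K := \sum_r nu r * \sum_A i A r.
have K_gt0 : 0 < K.
  have T_gt0 : 0 < \sum_A i A r0.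
    by rewrite (bigD1 A0) //= ltr_pwDl ?lt0r ?i_neq0 ?i_ge0 // sumr_ge0.
  rewrite /K (bigD1 r0) //= ltr_pwDl ?mulr_gt0 // sumr_ge0 // => r _.
  by rewrite mulr_ge0 ?sumr_ge0 // ltW.
have averageE : \sum_r nu r * \sum_A \sum_r' menu_kernel A r r' * i A r' = K.
  transitivity (\sum_A \sum_r' (\sum_r nu r * menu_kernel A r r') * i A r').
    under eq_bigr do rewrite mulr_sumr; rewrite exchange_big; apply: eq_bigr => A _ /=.
    under eq_bigr do rewrite mulr_sumr; rewrite exchange_big; apply: eq_bigr => r' _ /=.
    by rewrite mulr_suml; apply: eq_bigr => r _; rewrite mulrA.
  rewrite /K exchange_big; apply: eq_bigr => r' _.
  by rewrite mulr_sumr; apply: eq_bigr => A _; rewrite nu_inv.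
have [/existsP [r lt_r] | /existsPn ge_r] := boolP [exists r,
    delta * \sum_A \sum_r' menu_kernel A r r' * i A r' < \sum_A i A r].
  by exists r; rewrite no_investment_sumE.
suff : K <= delta * K by nra.
rewrite -{2}averageE mulr_sumr; apply: ler_sum => r _; rewrite mulrCA.
by apply: ler_wpM2l; [exact: ltW | rewrite leNgt ge_r].
Qed.

(* Shifting [f] by a large constant gives a strict plan with the same drift; with
   [delta] close enough to 1 a gain of one unit then outweighs the discount. *)
Lemma no_investment_gain (A0 : X2 X) (r0 : LO X) (f : X2 X -> LO X -> R) :
  no_investment t s pi -> ~ (forall r, 1 <= \sum_A drift (menu_kernel A) (f A) r).
Proof.
move=> ni gain.
pose c := 1 + \sum_A \sum_r `|f A r|.
pose i A r := f A r + c.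
have i_ge1 A r : 1 <= i A r.
  have : `|f A r| <= \sum_A \sum_r `|f A r|.
    rewrite (bigD1 A) //= (bigD1 r) //= -addrA lerDl addr_ge0 ?sumr_ge0 // => *.
    exact: sumr_ge0.
  by rewrite /i /c; have := ler_norm (- f A r); rewrite normrN; lra.
pose T r := \sum_A i A r.
have T_ge0 r : 0 <= T r by apply: sumr_ge0 => A _; apply: le_trans (i_ge1 A r).
pose K := \sum_r T r.
have T_le r : T r <= K by rewrite /K (bigD1 r) //= lerDl sumr_ge0.
have K_ge0 : 0 <= K by apply: sumr_ge0.
pose delta := (K + 1) / (K + 2).
have delta_01 : 0 < delta < 1.
  by rewrite divr_gt0 ?ltr_pdivrMr /=; lra.
have T_le_delta r : T r <= delta * (T r + 1).
  by rewrite mulrAC ler_pdivlMr; [have := T_le r; nra | lra].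
have i_strict : strict_investment_plan i.
  split=> [A r|]; first exact: le_trans (i_ge1 A r).
  by exists A0, r0; rewrite gt_eqF // (lt_le_trans ltr01 (i_ge1 A0 r0)).
have [r] := ni i delta i_strict delta_01; rewrite no_investment_sumE.
have -> : \sum_A \sum_r' menu_kernel A r r' * i A r' =
          T r + \sum_A drift (menu_kernel A) (f A) r.
  rewrite /T -big_split; apply: eq_bigr => A _ /=.
  by rewrite -(drift_shift (menu_kernel_stochastic A) _ c) /drift addrC subrK.
rewrite -/(T r); have := gain r; have := T_le_delta r.
by case/andP: delta_01 => delta_gt0 _; nra.
Qed.

Lemma no_investment_invariant_eq A A' mu mu' : no_investment t s pi ->
  is_dist mu -> invariant (menu_kernel A) mu ->
  is_dist mu' -> invariant (menu_kernel A') mu' -> forall r, mu r = mu' r.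
Proof.
move=> ni mu_dist mu_inv mu'_dist mu'_inv r1.
case: (eqVneq (mu r1) (mu' r1)) => // neq; exfalso.
have [w [mu_w mu'_w]] := separating_weight mu_dist.2 mu'_dist.2 neq.
have [fa fa_drift] := exists_drift_eq (menu_kernel_stochastic A)
  (@menu_kernel_gt0 A) mu_dist mu_inv mu_w.
have [fb fb_drift] := exists_drift_eq (menu_kernel_stochastic A')
  (@menu_kernel_gt0 A') mu'_dist mu'_inv mu'_w.
apply: (no_investment_gain A r1
  (f := fun C y => (C == A)%:R * fa y + (C == A')%:R * fb y) ni) => r.
under eq_bigr do rewrite drift_lin !mulr_natl !mulrb.
by rewrite big_split /= -!big_mkcond !big_pred1_eq fa_drift fb_drift; lra.
Qed.

Lemma no_investment_common_invariant (A0 : X2 X) (r0 : LO X) :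
  no_investment t s pi -> exists nu, common_invariant nu.
Proof.
move=> ni.
have [nu [nu_dist nu_inv]] := exists_invariant_dist (menu_kernel_stochastic A0) r0.
exists nu; split=> // A.
have [mu [mu_dist mu_inv]] := exists_invariant_dist (menu_kernel_stochastic A) r0.
apply: (eq_invariant _ mu_inv) => r.
exact: no_investment_invariant_eq ni mu_dist mu_inv nu_dist nu_inv r.
Qed.
End Model.

Unset Implicit Arguments.

Theorem theorem3 (R : realType) (X : finType) (hX : (1 < #|X|)%N)
    (t : X -> LO X -> LO X -> R) (s : X2 X -> X2 X -> R) (pi : X2 X -> R) :
  transition_fun t -> full_support_t t ->
  arrival_fun s -> full_support_s s ->
  stationary_s s pi ->
  jointly_menu_invariant t s <-> no_investment t s pi.
Proof.
move=> t_trans t_pos s_arr s_pos pi_stat; split.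
- move=> jmi i delta i_strict delta_01.
  have [_ [A [r _]]] := i_strict.
  have [nu nu_common] :=
    jointly_menu_invariant_common_invariant t_trans s_arr s_pos pi_stat (A, r) jmi.
  exact: (common_invariant_no_investment t_pos s_pos pi_stat nu_common).
- move=> ni psi psi_stat.
  have [[A r] _] := exists_dist_gt0 psi_stat.1.
  have [nu nu_common] :=
    no_investment_common_invariant t_trans t_pos s_pos pi_stat A r ni.
  exact: (common_invariant_jointly_menu_invariant t_trans t_pos s_arr s_pos pi_stat
    nu_common).
Qed.
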